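(* Let $q>1$. For all $m\in\mathbb{N}\cup\{0\}$, $n\in\mathbb{N}$ and $z\in\mathbb{C}$, \[U_{n,q}(e_{m+1};z)=\frac{q^m z(1-z)}{[n+m]_q}D_qU_{n,q}(e_m;z)+\frac{q^m[n]_qz+[m]_q}{[n+m]_q}U_{n,q}(e_m;z).\]
   Context: For an integer $n\ge 0$ and $p>0$: $[n]_p=1+p+\dots+p^{n-1}$ ($[0]_p=0$), $[n]_p!=[1]_p\cdots[n]_p$ ($[0]_p!=1$), $\left[\begin{smallmatrix}n\\k\end{smallmatrix}\right]_p=\frac{[n]_p!}{[k]_p![n-k]_p!}$. For $z\in\mathbb{C}$, $(1-z)_p^n=\prod_{s=0}^{n-1}(1-p^s z)$ and $p_{n,k}(p;z)=\left[\begin{smallmatrix}n\\k\end{smallmatrix}\right]_p z^k(1-z)_p^{n-k}$. For $0<p<1$, $\int_0^1 g(t)\,d_pt=(1-p)\sum_{j=0}^\infty g(p^j)p^j$. For $q>1$, $n\in\mathbb{N}$ and $f:[0,1]\to\mathbb{C}$, \[U_{n,q}(f;z)=f(0)p_{n,0}(q;z)+f(1)p_{n,n}(q;z)+[n-1]_{q^{-1}}\sum_{k=1}^{n-1}q^{k-1}p_{n,k}(q;z)\int_0^1 p_{n-2,k-1}(q^{-1};q^{-1}t)\,f(q^{k-n}t)\,d_{q^{-1}}t\] (sum empty for $n=1$). $e_m(t)=t^m$. $D_qg(z)=\frac{g(qz)-g(z)}{(q-1)z}$ for $z\neq0$ and $D_qg(0)=g'(0)$. *)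

From Stdlib Require Import Reals ClassicalDescription ClassicalEpsilon.
From Coquelicot Require Import Coquelicot.
Open Scope R_scope.

Fixpoint qint (n : nat) (p : R) : R :=
  match n with O => 0 | S k => qint k p + p ^ k end.

Fixpoint qfact (n : nat) (p : R) : R :=
  match n with O => 1 | S k => qfact k p * qint (S k) p end.

(* Gaussian binomial [n k]_p  (only used with k <= n) *)
Definition qbinom (n k : nat) (p : R) : R :=
  qfact n p / (qfact k p * qfact (n - k) p).

Fixpoint cpow (z : C) (n : nat) : C :=
  match n with O => RtoC 1 | S k => Cmult (cpow z k) z end.

Fixpoint qpoch (z : C) (p : R) (n : nat) : C :=
  match n with
  | O => RtoC 1
  | S k => Cmult (qpoch z p k) (Cminus (RtoC 1) (Cmult (RtoC (p ^ k)) z))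
  end.

Definition pnk (n k : nat) (p : R) (z : C) : C :=
  Cmult (Cmult (RtoC (qbinom n k p)) (cpow z k)) (qpoch z p (n - k)).

(* Jackson q-integral on [0,1] for 0 < p < 1 of a complex-valued function:
   (1-p) * sum_{j>=0} g(p^j) p^j, taken componentwise (real/imag parts). *)
Definition qintegral01 (p : R) (g : R -> C) : C :=
  Cmult (RtoC (1 - p))
    (Series (fun j => Re (g (p ^ j)) * p ^ j),
     Series (fun j => Im (g (p ^ j)) * p ^ j)).

Definition Unq (n : nat) (q : R) (f : R -> C) (z : C) : C :=
  Cplus (Cplus (Cmult (f 0) (pnk n 0 q z)) (Cmult (f 1) (pnk n n q z)))
   (Cmult (RtoC (qint (n - 1) (/ q)))
     (sum_n_m (fun k =>
        Cmult (Cmult (RtoC (q ^ (k - 1))) (pnk n k q z))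
          (qintegral01 (/ q)
             (fun t => Cmult (pnk (n - 2) (k - 1) (/ q) (RtoC (/ q * t)))
                             (f (powerRZ q (Z.of_nat k - Z.of_nat n)%Z * t)))))
        1 (n - 1))).

Definition em (m : nat) : R -> C := fun t => RtoC (t ^ m).

(* complex derivative at a point (chosen value; unique when it exists) *)
Definition cderiv (g : C -> C) (z : C) : C :=
  epsilon (inhabits (RtoC 0))
    (fun l => @is_derive C_AbsRing C_NormedModule g z l).

Definition Dq (q : R) (g : C -> C) (z : C) : C :=
  if excluded_middle_informative (z = RtoC 0) then cderiv g (RtoC 0)
  else Cdiv (Cminus (g (Cmult (RtoC q) z)) (g z)) (Cmult (RtoC (q - 1)) z).

From Stdlib Require Import Reals Lra Lia.
From Coquelicot Require Import Coquelicot.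
Open Scope R_scope.

(* Expanding the Jackson integrals, U_{n,q}(e_m) = sum_k w_{m,k} p_{n,k}(q;z) with
   weights given by q-Beta sums, and the q-Beta recursion gives
   [n+m]_q w_{m+1,k} = [k+m]_q w_{m,k} = ([m]_q + q^m [k]_q) w_{m,k}.
   The basis polynomials satisfy
   (1 - z)(p_{n,k}(qz) - p_{n,k}(z)) = (q - 1)([k]_q - [n]_q z) p_{n,k}(z),
   which turns sum_k [k]_q w_{m,k} p_{n,k} into a combination of D_q U_{n,q}(e_m)
   and z U_{n,q}(e_m).  At z = 0 the D_q term carries a factor z. *)

Lemma pow_unit_interval x c : 0 <= x <= 1 -> 0 <= x ^ c <= 1.
Proof. intros H; induction c; simpl; nra. Qed.

Section QBeta.
Variable p : R.
Hypothesis p_pos : 0 < p.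
Hypothesis p_lt_1 : p < 1.

(* [shifted_qpoch b t] is (1 - p t)_p^b, the real form of [qpoch (p t) p b]. *)
Fixpoint shifted_qpoch (b : nat) (t : R) : R :=
  match b with O => 1 | S k => shifted_qpoch k t * (1 - p ^ S k * t) end.

Lemma shifted_qpoch_unit_interval b t : 0 <= t <= 1 -> 0 <= shifted_qpoch b t <= 1.
Proof.
  intros Ht; induction b as [|b IH]; simpl; [lra|].
  assert (0 <= p * p ^ b <= 1) by (apply (pow_unit_interval p (S b)); lra).
  assert (0 <= p * p ^ b * t <= 1) by nra.
  nra.
Qed.

Lemma shifted_qpoch_succ b x :
  shifted_qpoch (S b) x = (1 - p * x) * shifted_qpoch b (p * x).
Proof.
  induction b as [|b IH]; [simpl; ring|].
  change (shifted_qpoch (S (S b)) x)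
    with (shifted_qpoch (S b) x * (1 - p ^ S (S b) * x)).
  rewrite IH; simpl; ring.
Qed.

Lemma pow_lt_1 k : (0 < k)%nat -> 0 <= p ^ k < 1.
Proof. intros; apply pow_lt_1_compat; [lra|lia]. Qed.

Definition qbeta_term (c b j : nat) : R := (p ^ j) ^ c * shifted_qpoch b (p ^ j) * p ^ j.

(* (1 - p) * qbeta c b is the Jackson integral of t^c (1 - p t)_p^b over [0,1]. *)
Definition qbeta (c b : nat) : R := Series (qbeta_term c b).

Lemma ex_series_qbeta_term c b : ex_series (qbeta_term c b).
Proof.
  apply (@ex_series_le R_AbsRing R_CompleteNormedModule _ (fun j => p ^ j)).
  - intros j; unfold qbeta_term; change norm with Rabs; simpl.
    assert (0 <= p ^ j <= 1) by (apply pow_unit_interval; lra).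
    assert (0 <= (p ^ j) ^ c <= 1) by (apply pow_unit_interval; lra).
    assert (0 <= shifted_qpoch b (p ^ j) <= 1)
      by (apply shifted_qpoch_unit_interval; lra).
    assert (0 <= (p ^ j) ^ c * shifted_qpoch b (p ^ j) <= 1) by nra.
    rewrite Rabs_pos_eq; nra.
  - apply ex_series_geom; rewrite Rabs_pos_eq; lra.
Qed.

Lemma qbeta_0 c : qbeta c 0 = / (1 - p ^ S c).
Proof.
  unfold qbeta; rewrite <- Series_geom.
  - apply Series_ext; intros j; unfold qbeta_term; simpl shifted_qpoch.
    rewrite Rmult_1_r, <- !pow_mult, <- pow_add.
    replace (j * c + j)%nat with (S c * j)%nat by lia.
    rewrite pow_mult; ring.
  - destruct (pow_lt_1 (S c)); [lia|]; rewrite Rabs_pos_eq; lra.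
Qed.

Lemma qbeta_succ_peel c b : qbeta c (S b) = qbeta c b - p ^ S b * qbeta (S c) b.
Proof.
  unfold qbeta; rewrite <- Series_scal_l, <- Series_minus.
  - apply Series_ext; intros j; unfold qbeta_term; simpl; ring.
  - apply ex_series_qbeta_term.
  - exact (ex_series_scal_l (K:=R_AbsRing) (V:=R_NormedModule) (p ^ S b) _
             (ex_series_qbeta_term (S c) b)).
Qed.

(* Reindexing the Jackson sum by t -> p t absorbs the first factor (1 - p t). *)
Lemma qbeta_succ_shift c b : p ^ S c * qbeta c (S b) = qbeta c b - qbeta (S c) b.
Proof.
  unfold qbeta; rewrite <- Series_scal_l, <- Series_minus by apply ex_series_qbeta_term.
  rewrite (Series_incr_1_aux (fun j => qbeta_term c b j - qbeta_term (S c) b j)).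
  - apply Series_ext; intros j; unfold qbeta_term; rewrite shifted_qpoch_succ.
    simpl; rewrite !Rpow_mult_distr; ring.
  - unfold qbeta_term; simpl; rewrite pow1; ring.
Qed.

Lemma qbeta_succ c b :
  qbeta c (S b) * (1 - p ^ S b * p ^ S c) = (1 - p ^ S b) * qbeta c b.
Proof. pose proof (qbeta_succ_shift c b); pose proof (qbeta_succ_peel c b); nra. Qed.

Lemma qbeta_succ_ratio c b :
  qbeta (S c) b * (1 - p ^ (c + b + 2)) = (1 - p ^ S c) * qbeta c b.
Proof.
  induction b as [|b IH].
  - rewrite !qbeta_0; replace (c + 0 + 2)%nat with (S (S c)) by lia.
    destruct (pow_lt_1 (S c)); [lia|]; destruct (pow_lt_1 (S (S c))); [lia|].
    field; lra.
  - pose proof (qbeta_succ (S c) b) as Hc1; pose proof (qbeta_succ c b) as Hc.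
    rewrite <- pow_add in Hc1, Hc.
    replace (S b + S (S c))%nat with (c + S b + 2)%nat in Hc1 by lia.
    replace (S b + S c)%nat with (c + b + 2)%nat in Hc by lia.
    destruct (pow_lt_1 (c + b + 2)); [lia|].
    apply (Rmult_eq_reg_r (1 - p ^ (c + b + 2))); [|lra].
    rewrite Hc1, Rmult_assoc, IH, Rmult_assoc, Hc; ring.
Qed.

End QBeta.

Lemma qint_mul_pred a q : (q - 1) * qint a q = q ^ a - 1.
Proof. induction a as [|a IH]; simpl; [ring|]; rewrite Rmult_plus_distr_l, IH; ring. Qed.

Lemma qint_add k m q : qint (k + m) q = qint m q + q ^ m * qint k q.
Proof. induction k as [|k IH]; simpl; [ring|]; rewrite IH, pow_add; ring. Qed.

Lemma qint_pos a q : 0 < q -> (0 < a)%nat -> 0 < qint a q.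
Proof.
  intros Hq Ha; induction a as [|[|a] IH]; [lia|simpl; lra|].
  change (qint (S (S a)) q) with (qint (S a) q + q ^ S a).
  pose proof (pow_lt q (S a) Hq); assert (0 < qint (S a) q) by (apply IH; lia); lra.
Qed.

Lemma RtoC_neq_0 x : x <> 0 -> RtoC x <> RtoC 0.
Proof. intros H E; apply H, RtoC_inj, E. Qed.

Lemma cpow_RtoC x j : cpow (RtoC x) j = RtoC (x ^ j).
Proof. induction j as [|j IH]; simpl; [reflexivity|]; rewrite IH, RtoC_mult; ring. Qed.

Lemma cpow_mult_RtoC q z k : cpow (Cmult (RtoC q) z) k = Cmult (RtoC (q ^ k)) (cpow z k).
Proof. induction k as [|k IH]; simpl; [ring|]; rewrite IH, RtoC_mult; ring. Qed.

Lemma qpoch_RtoC p t b : qpoch (RtoC (p * t)) p b = RtoC (shifted_qpoch p b t).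
Proof.
  induction b as [|b IH]; simpl; [reflexivity|].
  rewrite IH, (RtoC_mult (shifted_qpoch p b t)); f_equal.
  rewrite RtoC_minus, <- RtoC_mult; do 2 f_equal; ring.
Qed.

Lemma pnk_RtoC N j p t :
  pnk N j p (RtoC (p * t))
  = RtoC (qbinom N j p * (p * t) ^ j * shifted_qpoch p (N - j) t).
Proof. unfold pnk; rewrite cpow_RtoC, qpoch_RtoC, !RtoC_mult; reflexivity. Qed.

Lemma qintegral01_pnk_em p Q N j m :
  qintegral01 p (fun t => Cmult (pnk N j p (RtoC (p * t))) (em m (Q * t)))
  = RtoC ((1 - p) * (qbinom N j p * p ^ j * Q ^ m * qbeta p (j + m) (N - j))).
Proof.
  unfold qintegral01.
  transitivity (Cmult (RtoC (1 - p)) (RtoC (Series (fun i =>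
    qbinom N j p * p ^ j * Q ^ m * qbeta_term p (j + m) (N - j) i)))).
  - f_equal; match goal with |- _ = RtoC ?x => change (RtoC x) with (x, 0) end.
    f_equal.
    + apply Series_ext; intros i; rewrite pnk_RtoC; unfold em, qbeta_term.
      rewrite <- RtoC_mult; simpl; rewrite !Rpow_mult_distr, pow_add; ring.
    + rewrite (Series_ext _ (fun i => 0 * p ^ i)), Series_scal_l; [ring|].
      intros i; rewrite pnk_RtoC; unfold em; rewrite <- RtoC_mult; simpl; ring.
  - rewrite Series_scal_l, <- RtoC_mult; reflexivity.
Qed.

Lemma qpoch_qshift q z b :
  Cmult (Cminus (RtoC 1) z) (qpoch (Cmult (RtoC q) z) q b)
  = Cmult (qpoch z q b) (Cminus (RtoC 1) (Cmult (RtoC (q ^ b)) z)).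
Proof.
  induction b as [|b IH]; simpl; [ring|].
  rewrite (RtoC_mult q (q ^ b)).
  transitivity (Cmult (Cmult (Cminus (RtoC 1) z) (qpoch (Cmult (RtoC q) z) q b))
     (Cminus (RtoC 1) (Cmult (RtoC (q ^ b)) (Cmult (RtoC q) z)))); [ring|].
  rewrite IH; ring.
Qed.

Lemma pnk_qdiff q n k z : (k <= n)%nat ->
  Cmult (Cminus (RtoC 1) z) (Cminus (pnk n k q (Cmult (RtoC q) z)) (pnk n k q z))
  = Cmult (Cmult (RtoC (q - 1)) (Cminus (RtoC (qint k q)) (Cmult (RtoC (qint n q)) z)))
          (pnk n k q z).
Proof.
  intros Hk; unfold pnk; rewrite cpow_mult_RtoC.
  pose proof (qpoch_qshift q z (n - k)) as Hpoch.
  set (B := RtoC (qbinom n k q)) in *; set (P := qpoch z q (n - k)) in *.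
  set (P' := qpoch (Cmult (RtoC q) z) q (n - k)) in *.
  assert (Ek : Cmult (RtoC (q - 1)) (RtoC (qint k q)) = Cminus (RtoC (q ^ k)) (RtoC 1))
    by (rewrite <- RtoC_mult, <- RtoC_minus, qint_mul_pred; reflexivity).
  assert (En : Cmult (RtoC (q - 1)) (RtoC (qint n q))
               = Cminus (Cmult (RtoC (q ^ k)) (RtoC (q ^ (n - k)))) (RtoC 1)).
  { rewrite <- !RtoC_mult, <- RtoC_minus, qint_mul_pred, <- pow_add.
    replace (k + (n - k))%nat with n by lia; reflexivity. }
  transitivity (Cminus (Cmult (Cmult (Cmult B (RtoC (q ^ k))) (cpow z k))
                          (Cmult (Cminus (RtoC 1) z) P'))
                       (Cmult (Cmult (Cmult B (cpow z k)) P) (Cminus (RtoC 1) z))); [ring|].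
  rewrite Hpoch.
  transitivity (Cmult (Cmult (Cmult B (cpow z k)) P)
    (Cminus (Cmult (RtoC (q - 1)) (RtoC (qint k q)))
            (Cmult (Cmult (RtoC (q - 1)) (RtoC (qint n q))) z))); [rewrite Ek, En|]; ring.
Qed.

Definition basis_sum q n (w : nat -> R) (z : C) : C :=
  sum_n (fun k => Cmult (RtoC (w k)) (pnk n k q z)) n.

Lemma basis_sum_ext q n w w' z : (forall k, (k <= n)%nat -> w k = w' k) ->
  basis_sum q n w z = basis_sum q n w' z.
Proof. intros H; apply sum_n_ext_loc; intros k Hk; rewrite H by exact Hk; reflexivity. Qed.

Lemma basis_sum_plus q n w w' z :
  basis_sum q n (fun k => w k + w' k) z = Cplus (basis_sum q n w z) (basis_sum q n w' z).
Proof.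
  unfold basis_sum; rewrite <- (sum_n_plus (G:=C_AbelianMonoid)).
  apply sum_n_ext; intros k; rewrite RtoC_plus; apply Cmult_plus_distr_r.
Qed.

Lemma basis_sum_scal q n c w z :
  basis_sum q n (fun k => c * w k) z = Cmult (RtoC c) (basis_sum q n w z).
Proof.
  unfold basis_sum; rewrite <- (sum_n_mult_l (K:=C_Ring)).
  apply sum_n_ext; intros k; rewrite RtoC_mult; apply eq_sym, Cmult_assoc.
Qed.

Lemma sum_n_lincomb (x y : C) (a b : nat -> C) N :
  sum_n (fun k => Cplus (Cmult x (a k)) (Cmult y (b k))) N
  = Cplus (Cmult x (sum_n a N)) (Cmult y (sum_n b N)).
Proof.
  rewrite (sum_n_plus (G:=C_AbelianMonoid) (fun k => Cmult x (a k))).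
  exact (f_equal2 Cplus (sum_n_mult_l (K:=C_Ring) x a N) (sum_n_mult_l (K:=C_Ring) y b N)).
Qed.

Lemma basis_sum_qdiff q n w z :
  Cmult (RtoC (q - 1))
    (Cminus (basis_sum q n (fun k => w k * qint k q) z)
            (Cmult (Cmult (RtoC (qint n q)) z) (basis_sum q n w z)))
  = Cmult (Cminus (RtoC 1) z)
      (Cminus (basis_sum q n w (Cmult (RtoC q) z)) (basis_sum q n w z)).
Proof.
  transitivity (Cplus (Cmult (RtoC (q - 1)) (basis_sum q n (fun k => w k * qint k q) z))
    (Cmult (Copp (Cmult (RtoC (q - 1)) (Cmult (RtoC (qint n q)) z))) (basis_sum q n w z)));
    [ring|].
  transitivity (Cplus (Cmult (Cminus (RtoC 1) z) (basis_sum q n w (Cmult (RtoC q) z)))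
    (Cmult (Copp (Cminus (RtoC 1) z)) (basis_sum q n w z))); [|ring].
  unfold basis_sum; rewrite <- !sum_n_lincomb.
  apply sum_n_ext_loc; intros k Hk.
  match goal with |- ?a = ?b => change (@eq C a b) end.
  transitivity (Cmult (RtoC (w k))
    (Cmult (Cminus (RtoC 1) z) (Cminus (pnk n k q (Cmult (RtoC q) z)) (pnk n k q z))));
    [rewrite pnk_qdiff by exact Hk; rewrite RtoC_mult|]; ring.
Qed.

(* The Jackson integral in the k-th term of U_{n,q}(e_m), for 0 < k < n. *)
Definition Unq_integral q n m k : R :=
  (1 - / q) * (qbinom (n - 2) (k - 1) (/ q) * (/ q) ^ (k - 1) *
     powerRZ q (Z.of_nat k - Z.of_nat n) ^ m * qbeta (/ q) (k - 1 + m) (n - 2 - (k - 1))).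

Definition Unq_coef q n m k : R :=
  if Nat.eqb k 0 then 0 ^ m else if Nat.eqb k n then 1
  else qint (n - 1) (/ q) * q ^ (k - 1) * Unq_integral q n m k.

Lemma Unq_em_basis_sum q n m z : (1 <= n)%nat ->
  Unq n q (em m) z = basis_sum q n (Unq_coef q n m) z.
Proof.
  intros Hn; unfold Unq, basis_sum, sum_n.
  destruct n as [|n]; [lia|]; replace (S n - 1)%nat with n by lia.
  rewrite (sum_Sn_m _ 0) by lia; rewrite (sum_n_Sm _ 1) by lia.
  rewrite <- (sum_n_m_mult_l (K:=C_Ring)).
  rewrite (sum_n_m_ext_loc _
    (fun k => Cmult (RtoC (Unq_coef q (S n) m k)) (pnk (S n) k q z)) 1 n).
  - assert (Hlast : Unq_coef q (S n) m (S n) = 1)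
      by (unfold Unq_coef; rewrite Nat.eqb_refl; reflexivity).
    rewrite Hlast; change (Unq_coef q (S n) m 0) with (0 ^ m); unfold em; rewrite pow1.
    change (@plus C_AbelianMonoid) with Cplus; match goal with |- ?a = ?b => change (@eq C a b) end; ring.
  - intros k Hk; change (@mult C_Ring) with Cmult.
    rewrite qintegral01_pnk_em.
    unfold Unq_coef, Unq_integral.
    destruct (Nat.eqb_spec k 0); [lia|]; destruct (Nat.eqb_spec k (S n)); [lia|].
    replace (S n - 1)%nat with n by lia.
    rewrite !RtoC_mult.
    match goal with |- ?a = ?b => change (@eq C a b) end; ring.
Qed.

Lemma qint_pow_inv_ratio q a b : 0 < q -> q <> 1 ->
  (/ q) ^ a * (1 - (/ q) ^ b) * qint (a + b) q = (1 - (/ q) ^ (a + b)) * qint b q.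
Proof.
  intros Hq Hq1.
  apply (Rmult_eq_reg_l (q - 1)); [|lra].
  transitivity ((/ q) ^ a * (1 - (/ q) ^ b) * ((q - 1) * qint (a + b) q)); [ring|].
  transitivity ((1 - (/ q) ^ (a + b)) * ((q - 1) * qint b q)); [|ring].
  rewrite !qint_mul_pred, !pow_inv, !pow_add.
  pose proof (pow_lt q a Hq); pose proof (pow_lt q b Hq).
  field; lra.
Qed.

Lemma Unq_integral_succ q n m k : 1 < q -> (0 < k < n)%nat ->
  Unq_integral q n (S m) k * qint (n + m) q = Unq_integral q n m k * qint (k + m) q.
Proof.
  intros Hq Hk; unfold Unq_integral.
  set (p := / q).
  assert (Hp0 : 0 < p) by (apply Rinv_0_lt_compat; lra).
  assert (Hp1 : p < 1) by (rewrite <- Rinv_1; apply Rinv_lt_contravar; lra).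
  set (c := (k - 1 + m)%nat); set (b := (n - 2 - (k - 1))%nat).
  replace (k - 1 + S m)%nat with (S c) by (unfold c; lia).
  assert (HQ : powerRZ q (Z.of_nat k - Z.of_nat n) = p ^ (n - k)).
  { replace (Z.of_nat k - Z.of_nat n)%Z with (- Z.of_nat (n - k))%Z by lia.
    rewrite powerRZ_neg', <- pow_powerRZ; unfold p; rewrite pow_inv; reflexivity. }
  rewrite HQ.
  assert (Hratio : qbeta p (S c) b * (1 - p ^ (n + m)) = (1 - p ^ (k + m)) * qbeta p c b).
  { pose proof (qbeta_succ_ratio p Hp0 Hp1 c b) as H.
    replace (c + b + 2)%nat with (n + m)%nat in H by (unfold c, b; lia).
    replace (S c) with (k + m)%nat in H at 2 by (unfold c; lia); exact H. }
  assert (Hscale : p ^ (n - k) * (1 - p ^ (k + m)) * qint (n + m) q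
                   = (1 - p ^ (n + m)) * qint (k + m) q).
  { replace (n + m)%nat with (n - k + (k + m))%nat by lia.
    apply qint_pow_inv_ratio; lra. }
  assert (Hpnm : p ^ (n + m) < 1) by (apply pow_lt_1_compat; [lra|lia]).
  assert (Hbeta : p ^ (n - k) * qbeta p (S c) b * qint (n + m) q
                  = qbeta p c b * qint (k + m) q).
  { apply (Rmult_eq_reg_r (1 - p ^ (n + m))); [|lra].
    transitivity (p ^ (n - k) * (qbeta p (S c) b * (1 - p ^ (n + m))) * qint (n + m) q);
      [ring|].
    rewrite Hratio.
    transitivity (qbeta p c b * (p ^ (n - k) * (1 - p ^ (k + m)) * qint (n + m) q)); [ring|].
    rewrite Hscale; ring. }
  change ((p ^ (n - k)) ^ S m) with (p ^ (n - k) * (p ^ (n - k)) ^ m).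
  transitivity ((1 - p) * (qbinom (n - 2) (k - 1) p * p ^ (k - 1) * (p ^ (n - k)) ^ m) *
                (p ^ (n - k) * qbeta p (S c) b * qint (n + m) q)); [ring|].
  rewrite Hbeta; ring.
Qed.

Lemma Unq_coef_succ q n m k : 1 < q -> (k <= n)%nat ->
  Unq_coef q n (S m) k * qint (n + m) q = Unq_coef q n m k * qint (k + m) q.
Proof.
  intros Hq Hk; unfold Unq_coef.
  destruct (Nat.eqb_spec k 0) as [->|Hk0]; [destruct m; simpl; ring|].
  destruct (Nat.eqb_spec k n) as [->|Hkn]; [ring|].
  rewrite Rmult_assoc, Unq_integral_succ by (auto; lia); ring.
Qed.

Lemma basis_sum_Unq_coef_succ q n m z : 1 < q ->
  Cmult (RtoC (qint (n + m) q)) (basis_sum q n (Unq_coef q n (S m)) z)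
  = Cplus (Cmult (RtoC (qint m q)) (basis_sum q n (Unq_coef q n m) z))
          (Cmult (RtoC (q ^ m)) (basis_sum q n (fun k => Unq_coef q n m k * qint k q) z)).
Proof.
  intros Hq; rewrite <- !basis_sum_scal, <- basis_sum_plus.
  apply basis_sum_ext; intros k Hk.
  rewrite Rmult_comm, Unq_coef_succ, qint_add by assumption; ring.
Qed.

Theorem mainTheorem7 (q : R) (hq : 1 < q) (m n : nat) (hn : (1 <= n)%nat) (z : C) :
  Unq n q (em (S m)) z =
  Cplus
    (Cmult (Cdiv (Cmult (Cmult (RtoC (q ^ m)) z) (Cminus (RtoC 1) z))
                 (RtoC (qint (n + m) q)))
           (Dq q (Unq n q (em m)) z))
    (Cmult (Cdiv (Cplus (Cmult (RtoC (q ^ m * qint n q)) z) (RtoC (qint m q)))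
                 (RtoC (qint (n + m) q)))
           (Unq n q (em m) z)).
Proof.
  assert (Hnm : RtoC (qint (n + m) q) <> RtoC 0)
    by (apply RtoC_neq_0, Rgt_not_eq, qint_pos; [lra|lia]).
  assert (Hq1 : RtoC (q - 1) <> RtoC 0) by (apply RtoC_neq_0; lra).
  pose proof (basis_sum_qdiff q n (Unq_coef q n m) z) as Hqdiff.
  pose proof (basis_sum_Unq_coef_succ q n m z hq) as Hsucc.
  set (U := basis_sum q n (Unq_coef q n m)) in *.
  set (V := basis_sum q n (fun k => Unq_coef q n m k * qint k q) z) in *.
  assert (HV : V = Cplus (Cdiv (Cmult (Cminus (RtoC 1) z)
                                      (Cminus (U (Cmult (RtoC q) z)) (U z))) (RtoC (q - 1)))
                         (Cmult (Cmult (RtoC (qint n q)) z) (U z)))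
    by (rewrite <- Hqdiff; field; exact Hq1).
  assert (HU : basis_sum q n (Unq_coef q n (S m)) z
               = Cdiv (Cplus (Cmult (RtoC (qint m q)) (U z)) (Cmult (RtoC (q ^ m)) V))
                      (RtoC (qint (n + m) q)))
    by (rewrite <- Hsucc; field; exact Hnm).
  unfold Dq; rewrite !Unq_em_basis_sum by exact hn; fold (U z) (U (Cmult (RtoC q) z)).
  match goal with |- context [if ?zero_test then _ else _] =>
    destruct zero_test as [->|Hz] end.
  - rewrite Cmult_0_r in HV; rewrite HU, HV, RtoC_mult; field; auto.
  - rewrite HU, HV, RtoC_mult; field; auto.
Qed.
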